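(* Let $\lambda$ be a nonzero real number and let $p,r\in\mathbb{N}$ with $p>1$. Then \[ I_{\lambda}(r,p):=\int_{0}^{1}x^{r-1}\mathrm{Li}_{p,\lambda}(x)\,dx=\sum_{k=1}^{p-1}\frac{(-1)^{k-1}}{r^{k}}\zeta_{\lambda}(p-k+1)+\frac{(-1)^{p-1}}{r^{p}}\sum_{i=0}^{r-1}\frac{1}{\binom{\lambda+i}{i}(\lambda+i+1)}, \] where $\binom{\lambda+i}{i}=\frac{(\lambda+1)(\lambda+2)\cdots(\lambda+i)}{i!}$ (equal to $1$ for $i=0$).
   Context: Let $\lambda$ be a nonzero real number. For real $x$ and $\mu\neq 0$, set $(x)_{0,\mu}=1$ and $(x)_{n,\mu}=x(x-\mu)(x-2\mu)\cdots(x-(n-1)\mu)$ for $n\ge1$; in particular $(1)_{n,1/\lambda}=1\cdot(1-\tfrac1\lambda)(1-\tfrac2\lambda)\cdots(1-\tfrac{n-1}{\lambda})$. The degenerate polylogarithm is $\mathrm{Li}_{k,\lambda}(t)=\sum_{n=1}^{\infty}\frac{(-1)^{n-1}\lambda^{n-1}(1)_{n,1/\lambda}}{(n-1)!\,n^{k}}t^{n}$ for $k\in\mathbb{Z}$, $|t|<1$ (and by the same series where it converges). The degenerate zeta function is $\zeta_{\lambda}(s)=\sum_{n=1}^{\infty}\frac{(-1)^{n-1}\lambda^{n-1}(1)_{n,1/\lambda}}{(n-1)!\,n^{s}}$ for $\mathrm{Re}(s)>1$.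
   Formalization: The real number λ is required to satisfy −1 < λ as well as being nonzero. The statement above fails without it. *)

From Stdlib Require Import Reals ZArith.
From Coquelicot Require Import Coquelicot.
Open Scope R_scope.

Fixpoint deg_fall (x mu : R) (n : nat) : R :=
  match n with
  | O => 1
  | S m => deg_fall x mu m * (x - INR m * mu)
  end.

Definition deg_coef (lam : R) (n : nat) : R :=
  (-1) ^ (n - 1) * lam ^ (n - 1) * deg_fall 1 (1 / lam) n / INR (fact (n - 1)).

Definition deg_Li (k : Z) (lam t : R) : R :=
  Series (fun m : nat => deg_coef lam (S m) / powerRZ (INR (S m)) k * t ^ (S m)).

Definition deg_zeta (lam s : R) : R :=
  Series (fun m : nat => deg_coef lam (S m) / Rpower (INR (S m)) s).

Fixpoint rising_from1 (lam : R) (i : nat) : R :=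
  match i with
  | O => 1
  | S j => rising_from1 lam j * (lam + INR (S j))
  end.

Definition gbinom (lam : R) (i : nat) : R := rising_from1 lam i / INR (fact i).

From Stdlib Require Import Reals ZArith Lia Lra.
From Coquelicot Require Import Coquelicot.
Open Scope R_scope.

(* Write Li_{p,lam}(x) = sum_m a_m x^(m+1) / (m+1)^p, where the coefficients
   a_m = deg_coef lam (m+1) satisfy a_0 = 1 and (m+1) a_(m+1) = (m+1-lam) a_m.
   For lam > -1 the sequence |a_m| / (m+1) eventually decreases, with decrements
   (lam+1) |a_m| / ((m+1)(m+2)); hence sum_m |a_m| / ((m+1)(m+2)) < oo, and a
   Cesaro argument gives a_m / (m+1) -> 0.  The first fact makes the series of
   x^(r-1) Li_{p,lam}(x) converge uniformly on [0, 1], so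
   I = sum_m a_m / ((m+1)^p (m+1+r)).  The partial fraction
   1 / (n^p (n+r)) = (1/n^p - 1/(n^(p-1) (n+r))) / r peels off the zeta values
   one at a time, down to sum_m a_m / (n (n+r)) = (1/r) sum_(i<r) sum_m a_m / ((n+i)(n+i+1));
   by the recurrence for a_m, these inner sums telescope to the Beta values
   B(i+1, lam+1) = 1 / (binom(lam+i, i) (lam+i+1)). *)

Lemma is_series_Rplus (a b : nat -> R) (la lb : R) :
  is_series a la -> is_series b lb -> is_series (fun n => a n + b n) (la + lb).
Proof. exact (is_series_plus a b la lb). Qed.

Lemma is_series_Rscal (c : R) (a : nat -> R) (l : R) :
  is_series a l -> is_series (fun n => c * a n) (c * l).
Proof. exact (is_series_scal c a l). Qed.

Lemma is_series_Rext (a b : nat -> R) (l : R) :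
  (forall n, a n = b n) -> is_series a l -> is_series b l.
Proof. apply is_series_ext. Qed.

Lemma is_series_telescope (u : nat -> R) (l : R) :
  is_lim_seq u l -> is_series (fun m => u m - u (S m)) (u O - l).
Proof.
  intros Hu.
  assert (Hpartial : forall N, sum_n (fun m => u m - u (S m)) N = u O - u (S N)).
  { induction N as [|N IH].
    - now rewrite sum_O.
    - rewrite sum_Sn, IH. simpl. change plus with Rplus. ring. }
  change (is_lim_seq (sum_n (fun m => u m - u (S m))) (u O - l)).
  apply (is_lim_seq_ext (fun N => u O - u (S N))); [intros N; now rewrite Hpartial|].
  apply is_lim_seq_minus'; [apply is_lim_seq_const|].
  now apply (is_lim_seq_incr_1 u l).
Qed.

Lemma is_lim_seq_const_div_INR (c : R) : is_lim_seq (fun N => c / INR N) 0.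
Proof.
  pose proof (is_lim_seq_inv INR p_infty is_lim_seq_INR ltac:(discriminate)) as Hinv.
  apply (is_lim_seq_scal_l _ c) in Hinv. simpl in Hinv.
  now rewrite Rmult_0_r in Hinv.
Qed.

Lemma INR_S_pos (m : nat) : 0 < INR (S m).
Proof. apply lt_0_INR. lia. Qed.

Lemma INR_S_add (m m0 : nat) : INR (S (m + m0)) = INR m + (INR m0 + 1).
Proof. rewrite S_INR, plus_INR. ring. Qed.

Lemma is_lim_seq_mult_0_bounded (u v : nat -> R) :
  is_lim_seq u 0 -> (forall n, Rabs (v n) <= 1) -> is_lim_seq (fun n => u n * v n) 0.
Proof.
  intros Hu Hv. apply is_lim_seq_abs_0 in Hu. apply is_lim_seq_abs_0.
  apply (is_lim_seq_le_le (fun _ => 0) _ (fun n => Rabs (u n))); [|apply is_lim_seq_const|exact Hu].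
  intros n. split; [apply Rabs_pos|]. rewrite Rabs_mult.
  pose proof (Rabs_pos (u n)). pose proof (Rabs_pos (v n)). specialize (Hv n). nra.
Qed.

Section RatioRecurrence.

Variables (lam c : R) (b : nat -> R).
Hypotheses (Hlam : -1 < lam) (Hc0 : 0 < c) (Hlam_c : lam < c)
  (b_ge0 : forall k, 0 <= b k)
  (b_S : forall k, b (S k) = b k * (INR k + c - lam) / (INR k + c)).

Let u k := b k / (INR k + c).

Lemma INR_add_pos k : 0 < INR k + c.
Proof. pose proof (pos_INR k). lra. Qed.

Lemma ratio_step k :
  u k - u (S k) = (lam + 1) * (b k / ((INR k + c) * (INR k + c + 1))).
Proof.
  unfold u. rewrite b_S, S_INR. pose proof (INR_add_pos k). field. lra.
Qed.

Lemma ratio_cvg0 : is_lim_seq u 0.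
Proof.
  assert (u_ge0 : forall k, 0 <= u k).
  { intros k. apply Rdiv_le_0_compat; [apply b_ge0 | apply INR_add_pos]. }
  assert (u_decr : forall k, u (S k) <= u k).
  { intros k. pose proof (ratio_step k).
    assert (0 <= b k / ((INR k + c) * (INR k + c + 1))).
    { apply Rdiv_le_0_compat; [apply b_ge0|]. pose proof (INR_add_pos k). nra. }
    nra. }
  destruct (ex_finite_lim_seq_decr u 0 u_decr u_ge0) as [L HL].
  (* [b] moves by [-lam * u] at each step, so by Cesaro [b N / N] tends
     both to [-lam L] and to [L]. *)
  assert (b_partial : forall N, b (S N) = b O - lam * sum_n u N).
  { induction N as [|N IH].
    - rewrite sum_O, b_S. unfold u. simpl (INR 0). field. lra.
    - rewrite sum_Sn.
      change (b (S (S N)) = b O - lam * (sum_n u N + u (S N))).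
      change (u (S N)) with (b (S N) / (INR (S N) + c)).
      rewrite b_S, IH. pose proof (INR_add_pos (S N)). field. lra. }
  assert (Hmean : is_lim_seq (fun N => b (S N) / INR (S N)) (0 - lam * L)).
  { apply (is_lim_seq_ext (fun N => b O / INR (S N) - lam * (sum_n u N / INR (S N)))).
    { intros N. rewrite b_partial. field. apply not_0_INR. lia. }
    apply is_lim_seq_minus'.
    - apply (is_lim_seq_incr_1 (fun N => b O / INR N)), is_lim_seq_const_div_INR.
    - apply (is_lim_seq_scal_l _ lam L).
      pose proof (Cesaro_1 u L (proj1 (is_lim_seq_Reals _ _) HL)) as HC.
      apply is_lim_seq_Reals, (is_lim_seq_incr_1 _ L) in HC.
      revert HC. apply is_lim_seq_ext. intros N. now rewrite sum_n_Reals. }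
  assert (Hratio : is_lim_seq (fun N => b (S N) / INR (S N)) (L * (1 + 0))).
  { apply (is_lim_seq_ext (fun N => u (S N) * (1 + c / INR (S N)))).
    { intros N. unfold u. pose proof (INR_add_pos (S N)).
      pose proof (INR_S_pos N). field. lra. }
    apply is_lim_seq_mult'; [now apply (is_lim_seq_incr_1 u L)|].
    apply is_lim_seq_plus'; [apply is_lim_seq_const|].
    apply (is_lim_seq_incr_1 (fun N => c / INR N)), is_lim_seq_const_div_INR. }
  apply is_lim_seq_unique in Hmean. apply is_lim_seq_unique in Hratio.
  rewrite Hmean in Hratio. injection Hratio as EL.
  replace L with 0 in HL by nra. exact HL.
Qed.

Lemma ex_series_ratio : ex_series (fun k => b k / ((INR k + c) * (INR k + c + 1))).
Proof.
  exists (/ (lam + 1) * (u O - 0)).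
  apply (is_series_Rext (fun k => / (lam + 1) * (u k - u (S k)))).
  { intros k. rewrite ratio_step. field.
    pose proof (INR_add_pos k). repeat split; lra. }
  apply is_series_Rscal, is_series_telescope, ratio_cvg0.
Qed.

End RatioRecurrence.

Section CoefficientRecurrence.

Variables (lam : R) (a : nat -> R).
Hypotheses (Hlam : -1 < lam)
  (a_S : forall m, a (S m) = a m * (INR (S m) - lam) / INR (S m)).

Lemma abs_coef_shift_S (m0 : nat) (Hm0 : lam < INR m0 + 1) (k : nat) :
  Rabs (a (S k + m0)) =
  Rabs (a (k + m0)) * (INR k + (INR m0 + 1) - lam) / (INR k + (INR m0 + 1)).
Proof.
  change (S k + m0)%nat with (S (k + m0)). rewrite a_S, INR_S_add.
  pose proof (pos_INR k). pose proof (pos_INR m0).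
  unfold Rdiv. rewrite !Rabs_mult, Rabs_inv.
  rewrite (Rabs_pos_eq (_ - lam)), (Rabs_pos_eq (_ + _)) by lra. reflexivity.
Qed.

Lemma exists_shift_above : exists m0, lam < INR m0 + 1.
Proof. destruct (INR_unbounded lam) as [m0 Hm0]. exists m0. lra. Qed.

Lemma coef_div_cvg0 : is_lim_seq (fun m => a m / INR (S m)) 0.
Proof.
  destruct exists_shift_above as [m0 Hm0].
  apply is_lim_seq_abs_0, (is_lim_seq_incr_n _ m0).
  apply (is_lim_seq_ext (fun k => Rabs (a (k + m0)) / (INR k + (INR m0 + 1)))).
  { intros k. rewrite Rabs_div, (Rabs_pos_eq (INR _)), INR_S_add; [reflexivity | |].
    - apply pos_INR.
    - apply not_0_INR. lia. }
  apply (ratio_cvg0 lam); try lra.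
  - pose proof (pos_INR m0). lra.
  - intros k. apply Rabs_pos.
  - now apply abs_coef_shift_S.
Qed.

Lemma ex_series_abs_coef :
  ex_series (fun m => Rabs (a m) / (INR (S m) * INR (S (S m)))).
Proof.
  destruct exists_shift_above as [m0 Hm0].
  apply (ex_series_incr_n _ m0).
  apply (ex_series_ext (fun k =>
           Rabs (a (k + m0)) / ((INR k + (INR m0 + 1)) * (INR k + (INR m0 + 1) + 1)))).
  { intros k. rewrite (Nat.add_comm m0 k). change (S (S (k + m0))) with (S (S k + m0)).
    rewrite !INR_S_add, (S_INR k). f_equal. ring. }
  apply (ex_series_ratio lam); try lra.
  - pose proof (pos_INR m0). lra.
  - intros k. apply Rabs_pos.
  - now apply abs_coef_shift_S.
Qed.

End CoefficientRecurrence.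

(** [beta_term lam i] is the Beta value B(i + 1, lam + 1) = i! / ((lam + 1) ... (lam + i + 1)). *)
Definition beta_term (lam : R) (i : nat) : R := 1 / (gbinom lam i * (lam + INR i + 1)).

Lemma rising_from1_pos (lam : R) (i : nat) : -1 < lam -> 0 < rising_from1 lam i.
Proof.
  intros Hlam. induction i as [|i IH]; cbn [rising_from1]; [lra|].
  apply Rmult_lt_0_compat; [exact IH|]. rewrite S_INR. pose proof (pos_INR i). lra.
Qed.

Lemma beta_term_0 (lam : R) : -1 < lam -> beta_term lam 0 = / (lam + 1).
Proof. intros Hlam. unfold beta_term, gbinom. simpl. field. lra. Qed.

Lemma beta_term_S (lam : R) (i : nat) : -1 < lam ->
  beta_term lam (S i) = INR (S i) / (lam + INR i + 2) * beta_term lam i.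
Proof.
  intros Hlam. unfold beta_term, gbinom.
  rewrite fact_simpl, mult_INR. cbn [rising_from1]. rewrite !S_INR.
  pose proof (rising_from1_pos lam i Hlam). pose proof (pos_INR i).
  pose proof (INR_fact_neq_0 i). field. repeat split; lra.
Qed.

Section BetaSeries.

Variables (lam : R) (a : nat -> R).
Hypotheses (Hlam : -1 < lam) (a_0 : a O = 1)
  (a_S : forall m, a (S m) = a m * (INR (S m) - lam) / INR (S m)).

Lemma is_series_beta (i : nat) :
  is_series (fun m => a m / ((INR (S m) + INR i) * (INR (S m) + INR i + 1))) (beta_term lam i).
Proof.
  pose proof (coef_div_cvg0 lam a Hlam a_S) as Hcvg.
  induction i as [|i IH].
  - apply (is_series_Rext (fun m => / (lam + 1) * (a m / INR (S m) - a (S m) / INR (S (S m))))).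
    { intros m. rewrite a_S, (S_INR (S m)). simpl (INR 0).
      pose proof (INR_S_pos m). field. lra. }
    replace (beta_term lam 0) with (/ (lam + 1) * (a O / INR 1 - 0))
      by (rewrite beta_term_0, a_0 by exact Hlam; simpl; field; lra).
    apply is_series_Rscal, (is_series_telescope (fun m => a m / INR (S m))), Hcvg.
  - (* [d] telescopes and [d 0 = 0], which yields the recurrence [beta_term_S]. *)
    set (d m := a m * INR m / ((INR (S m) + INR i) * (INR (S m) + INR i + 1))).
    assert (Hd : is_lim_seq d 0).
    { apply (is_lim_seq_ext (fun m => a m / INR (S m) *
               (INR m * INR (S m) / ((INR (S m) + INR i) * (INR (S m) + INR i + 1))))).
      { intros m. unfold d. pose proof (INR_S_pos m). pose proof (pos_INR i). field. lra. }
      apply is_lim_seq_mult_0_bounded; [exact Hcvg|].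
      intros m. rewrite !S_INR. pose proof (pos_INR i). pose proof (pos_INR m).
      assert (Hden : 0 < (INR m + 1 + INR i) * (INR m + 1 + INR i + 1))
        by (apply Rmult_lt_0_compat; lra).
      rewrite Rabs_pos_eq by (apply Rdiv_le_0_compat; nra).
      apply (Rdiv_le_1 _ _ Hden). nra. }
    apply (is_series_Rext (fun m => / (lam + INR i + 2) *
             ((d m - d (S m)) +
              INR (S i) * (a m / ((INR (S m) + INR i) * (INR (S m) + INR i + 1)))))).
    { intros m. unfold d. rewrite a_S, !S_INR.
      pose proof (pos_INR i). pose proof (pos_INR m). field. repeat split; lra. }
    rewrite beta_term_S by exact Hlam.
    replace (INR (S i) / (lam + INR i + 2) * beta_term lam i)
      with (/ (lam + INR i + 2) * ((d O - 0) + INR (S i) * beta_term lam i))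
      by (unfold d; rewrite !S_INR; simpl (INR 0); field; pose proof (pos_INR i);
          repeat split; lra).
    apply is_series_Rscal, is_series_Rplus; [apply is_series_telescope, Hd|].
    apply is_series_Rscal, IH.
Qed.

Lemma is_series_sum_beta (r : nat) :
  is_series (fun m => a m * INR (S r) / (INR (S m) * (INR (S m) + INR (S r))))
    (sum_n (beta_term lam) r).
Proof.
  induction r as [|r IH].
  - rewrite sum_O.
    eapply is_series_Rext; [|exact (is_series_beta 0)]. intros m; cbv beta.
    rewrite (S_INR 0). simpl (INR 0). pose proof (INR_S_pos m). field. lra.
  - rewrite sum_Sn.
    eapply is_series_Rext; [|exact (is_series_Rplus _ _ _ _ IH (is_series_beta (S r)))].
    intros m; cbv beta. rewrite !S_INR. pose proof (pos_INR r). pose proof (pos_INR m).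
    field. repeat split; lra.
Qed.

End BetaSeries.

Lemma series_tail_le (a M : nat -> R) :
  (forall n, Rabs (a n) <= M n) -> ex_series M ->
  forall N, Rabs (Series a - sum_n a N) <= Series M - sum_n M N.
Proof.
  intros HaM HM N.
  assert (Habs : ex_series (fun n => Rabs (a n))).
  { apply (@ex_series_le R_AbsRing R_CompleteNormedModule _ M); [|exact HM].
    intros n. change (Rabs (Rabs (a n)) <= M n). now rewrite Rabs_Rabsolu. }
  assert (Ha : ex_series a) by now apply ex_series_Rabs.
  rewrite (Series_incr_n a (S N)), (Series_incr_n M (S N)) by (auto; lia).
  simpl pred. rewrite !sum_n_Reals.
  replace (sum_f_R0 a N + Series (fun k => a (S N + k)%nat) - sum_f_R0 a N)
    with (Series (fun k => a (S N + k)%nat)) by ring.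
  replace (sum_f_R0 M N + Series (fun k => M (S N + k)%nat) - sum_f_R0 M N)
    with (Series (fun k => M (S N + k)%nat)) by ring.
  eapply Rle_trans; [apply Series_Rabs, (ex_series_incr_n (fun n => Rabs (a n)) (S N)), Habs|].
  apply Series_le; [intros n; split; [apply Rabs_pos | apply HaM]|].
  now apply (ex_series_incr_n M (S N)).
Qed.

Lemma filterlim_uniform (f : nat -> R -> R) (g : R -> R) (e : nat -> R) :
  is_lim_seq e 0 -> (forall N x, Rabs (f N x - g x) <= e N) ->
  filterlim f eventually (@locally (fct_UniformSpace R R_CompleteNormedModule) g).
Proof.
  intros He Hfg P [eps Heps].
  apply is_lim_seq_spec in He. destruct (He eps) as [N0 HN0].
  exists N0. intros N HN. apply Heps. intros x.
  change (Rabs (f N x - g x) < eps).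
  specialize (HN0 N HN). rewrite Rminus_0_r in HN0.
  eapply Rle_lt_trans; [apply Hfg|]. eapply Rle_lt_trans; [apply Rle_abs | exact HN0].
Qed.

Lemma is_RInt_monomial (c : R) (n : nat) : is_RInt (fun x => c * x ^ n) 0 1 (c / INR (S n)).
Proof.
  replace (c / INR (S n)) with (c * (1 ^ S n / INR (S n) - 0 ^ S n / INR (S n))).
  - exact (is_RInt_scal _ 0 1 c _ (is_RInt_pow 0 1 n)).
  - rewrite pow1, pow_i by lia. field. apply not_0_INR. lia.
Qed.

Lemma is_RInt_sum_pow (c : nat -> R) (j N : nat) :
  is_RInt (fun x => sum_n (fun m => c m * x ^ (m + j)) N) 0 1
    (sum_n (fun m => c m / INR (S (m + j))) N).
Proof.
  induction N as [|N IH].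
  - eapply is_RInt_ext; [|rewrite sum_O; apply is_RInt_monomial].
    intros x _. now rewrite sum_O.
  - eapply is_RInt_ext;
      [|rewrite sum_Sn; exact (is_RInt_plus _ _ _ _ _ _ IH (is_RInt_monomial (c (S N)) (S N + j)))].
    intros x _. now rewrite sum_Sn.
Qed.

Lemma pow_le_1 (x : R) (k : nat) : 0 <= x <= 1 -> 0 <= x ^ k <= 1.
Proof. intros Hx. induction k as [|k IH]; simpl; nra. Qed.

(* Clamping [x] into [0, 1] turns uniform convergence on [0, 1] into the
   uniform convergence on all of [R] that [filterlim_RInt] asks for. *)
Lemma is_RInt_Series_pow (c : nat -> R) (j : nat) :
  ex_series (fun m => Rabs (c m)) ->
  is_RInt (fun x => Series (fun m => c m * x ^ (m + j))) 0 1
    (Series (fun m => c m / INR (S (m + j)))).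
Proof.
  intros Hc.
  set (clamp x := Rmax 0 (Rmin 1 x)).
  assert (clamp_01 : forall x, 0 <= clamp x <= 1).
  { intros x. unfold clamp. split; [apply Rmax_l|]. apply Rmax_lub; [lra | apply Rmin_l]. }
  assert (clamp_id : forall x, Rmin 0 1 < x < Rmax 0 1 -> clamp x = x).
  { intros x Hx. rewrite Rmin_left, Rmax_right in Hx by lra. unfold clamp.
    rewrite Rmin_right, Rmax_right by lra. reflexivity. }
  set (term x m := c m * clamp x ^ (m + j)).
  assert (term_le : forall x m, Rabs (term x m) <= Rabs (c m)).
  { intros x m. unfold term.
    rewrite Rabs_mult, <- RPow_abs, (Rabs_pos_eq (clamp x)) by apply clamp_01.
    pose proof (pow_le_1 _ (m + j) (clamp_01 x)). pose proof (Rabs_pos (c m)). nra. }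
  set (tail N := Series (fun m => Rabs (c m)) - sum_n (fun m => Rabs (c m)) N).
  assert (tail_cvg0 : is_lim_seq tail 0).
  { replace 0 with (Series (fun m => Rabs (c m)) - Series (fun m => Rabs (c m))) by ring.
    apply is_lim_seq_minus'; [apply is_lim_seq_const | exact (Series_correct _ Hc)]. }
  destruct (filterlim_RInt (fun N x => sum_n (term x) N) 0 1 eventually eventually_filter
              (fun x => Series (term x)) (sum_n (fun m => c m / INR (S (m + j)))))
    as [I [HI Hint]].
  - intros N. eapply is_RInt_ext; [|apply (is_RInt_sum_pow c j N)].
    intros x Hx. unfold term. now rewrite (clamp_id x Hx).
  - apply (filterlim_uniform _ _ tail tail_cvg0).
    intros N x. rewrite <- Rabs_Ropp, Ropp_minus_distr.
    now apply series_tail_le.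
  - replace (Series (fun m => c m / INR (S (m + j)))) with I
      by (symmetry; now apply is_series_unique).
    eapply is_RInt_ext; [|exact Hint].
    intros x Hx. unfold term. now rewrite (clamp_id x Hx).
Qed.

Definition dcoef (lam : R) (m : nat) : R := deg_coef lam (S m).

Lemma dcoef_0 (lam : R) : dcoef lam 0 = 1.
Proof. unfold dcoef, deg_coef. simpl. lra. Qed.

Lemma dcoef_S (lam : R) (m : nat) : lam <> 0 ->
  dcoef lam (S m) = dcoef lam m * (INR (S m) - lam) / INR (S m).
Proof.
  intros Hlam. unfold dcoef, deg_coef.
  replace (S (S m) - 1)%nat with (S m) by lia. replace (S m - 1)%nat with m by lia.
  change (deg_fall 1 (1 / lam) (S (S m)))
    with (deg_fall 1 (1 / lam) (S m) * (1 - INR (S m) * (1 / lam))).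
  rewrite fact_simpl, mult_INR. simpl pow.
  pose proof (INR_fact_neq_0 m). pose proof (INR_S_pos m). field. repeat split; lra.
Qed.

Lemma deg_Li_nat (s : nat) (lam t : R) :
  deg_Li (Z.of_nat s) lam t = Series (fun m => dcoef lam m / INR (S m) ^ s * t ^ S m).
Proof. unfold deg_Li. apply Series_ext. intros m. now rewrite <- pow_powerRZ. Qed.

Lemma inv_pow_le (s m : nat) : (2 <= s)%nat ->
  / INR (S m) ^ s <= 2 / (INR (S m) * INR (S (S m))).
Proof.
  intros Hs. rewrite (S_INR (S m)). set (n := INR (S m)).
  assert (Hn : 1 <= n) by (unfold n; rewrite S_INR; pose proof (pos_INR m); lra).
  assert (Hpow : n * n <= n ^ s).
  { replace s with (2 + (s - 2))%nat by lia. rewrite pow_add. simpl.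
    assert (1 <= n ^ (s - 2)) by (apply pow_R1_Rle; lra). nra. }
  apply (Rle_trans _ (/ (n * n))); [apply Rinv_le_contravar; nra|].
  assert (E : 2 / (n * (n + 1)) - / (n * n) = (n - 1) / (n * n * (n + 1))) by (field; lra).
  assert (0 <= (n - 1) / (n * n * (n + 1))) by (apply Rdiv_le_0_compat; nra).
  lra.
Qed.

Lemma ex_series_abs_dcoef_div_pow (lam : R) (s : nat) :
  lam <> 0 -> -1 < lam -> (2 <= s)%nat ->
  ex_series (fun m => Rabs (dcoef lam m / INR (S m) ^ s)).
Proof.
  intros Hlam0 Hlam Hs.
  apply (@ex_series_le R_AbsRing R_CompleteNormedModule _
           (fun m => 2 * (Rabs (dcoef lam m) / (INR (S m) * INR (S (S m)))))).
  - intros m. change (Rabs (Rabs (dcoef lam m / INR (S m) ^ s)) <=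
                      2 * (Rabs (dcoef lam m) / (INR (S m) * INR (S (S m))))).
    rewrite Rabs_Rabsolu, Rabs_div, <- RPow_abs, (Rabs_pos_eq (INR _)).
    + pose proof (inv_pow_le s m Hs). pose proof (Rabs_pos (dcoef lam m)).
      unfold Rdiv in *. nra.
    + apply pos_INR.
    + apply pow_nonzero. pose proof (INR_S_pos m). lra.
  - destruct (ex_series_abs_coef lam (dcoef lam) Hlam (fun m => dcoef_S lam m Hlam0)) as [l Hl].
    exists (2 * l). now apply is_series_Rscal.
Qed.

Lemma is_series_deg_zeta (lam : R) (s : nat) : lam <> 0 -> -1 < lam -> (2 <= s)%nat ->
  is_series (fun m => dcoef lam m / INR (S m) ^ s) (deg_zeta lam (INR s)).
Proof.
  intros Hlam0 Hlam Hs.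
  replace (deg_zeta lam (INR s)) with (Series (fun m => dcoef lam m / INR (S m) ^ s)).
  - now apply Series_correct, ex_series_Rabs, ex_series_abs_dcoef_div_pow.
  - unfold deg_zeta. apply Series_ext. intros m. unfold dcoef.
    now rewrite Rpower_pow by apply INR_S_pos.
Qed.

(* With [z s = zeta_lam(s)], [x = r], [q = p - 1] and [T] the sum of Beta values,
   this is the right-hand side of the theorem. *)
Definition zeta_expansion (z : nat -> R) (x T : R) (q : nat) : R :=
  sum_n_m (fun k => (-1) ^ (k - 1) / x ^ k * z (S q - k + 1)%nat) 1 q + (-1) ^ q / x ^ S q * T.

Lemma zeta_expansion_S (z : nat -> R) (x T : R) (q : nat) : x <> 0 ->
  zeta_expansion z x T (S q) = (z (S (S q)) - zeta_expansion z x T q) / x.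
Proof.
  intros Hx. unfold zeta_expansion.
  rewrite sum_Sn_m by lia. change plus with Rplus.
  rewrite <- (sum_n_m_S _ 1 q).
  rewrite (sum_n_m_ext_loc _ (fun k => (- / x) * ((-1) ^ (k - 1) / x ^ k * z (S q - k + 1)%nat))).
  2: { intros k Hk. destruct k as [|k]; [lia|].
       replace (S (S k) - 1)%nat with (S k) by lia. replace (S k - 1)%nat with k by lia.
       replace (S (S q) - S (S k) + 1)%nat with (S q - S k + 1)%nat by lia.
       simpl pow. change (@eq R (-1 * (-1) ^ k / (x * (x * x ^ k)) * z (S q - S k + 1)%nat)
                                (- / x * ((-1) ^ k / (x * x ^ k) * z (S q - S k + 1)%nat))).
       field. split; [apply pow_nonzero|]; exact Hx. }
  rewrite (sum_n_m_mult_l (- / x)). change mult with Rmult.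
  change (@sum_n_m (Ring.AbelianMonoid R_Ring)) with (@sum_n_m R_AbelianMonoid).
  replace (S (S q) - 1 + 1)%nat with (S (S q)) by lia.
  simpl pow. field. split; [apply pow_nonzero|]; exact Hx.
Qed.

Lemma is_series_zeta_expansion (lam : R) (r q : nat) : lam <> 0 -> -1 < lam ->
  is_series (fun m => dcoef lam m / (INR (S m) ^ S q * (INR (S m) + INR (S r))))
    (zeta_expansion (fun s => deg_zeta lam (INR s)) (INR (S r)) (sum_n (beta_term lam) r) q).
Proof.
  intros Hlam0 Hlam.
  assert (Hr : 0 < INR (S r)) by apply INR_S_pos.
  induction q as [|q IH].
  - replace (zeta_expansion _ _ _ 0) with (/ INR (S r) * sum_n (beta_term lam) r).
    + eapply is_series_Rext;
        [|exact (is_series_Rscal _ _ _ (is_series_sum_beta lam (dcoef lam) Hlam (dcoef_0 lam)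
                                          (fun m => dcoef_S lam m Hlam0) r))].
      intros m; cbv beta. pose proof (INR_S_pos m). field. lra.
    + unfold zeta_expansion. rewrite sum_n_m_zero by lia.
      change (@zero R_AbelianMonoid) with 0. rewrite pow_O, pow_1. field. lra.
  - rewrite zeta_expansion_S by lra. cbv beta.
    set (E := zeta_expansion _ _ _ q) in *.
    replace ((deg_zeta lam (INR (S (S q))) - E) / INR (S r))
      with (/ INR (S r) * deg_zeta lam (INR (S (S q))) + - / INR (S r) * E) by (field; lra).
    eapply is_series_Rext;
      [|exact (is_series_Rplus _ _ _ _
                 (is_series_Rscal (/ INR (S r)) _ _
                    (is_series_deg_zeta lam (S (S q)) Hlam0 Hlam ltac:(lia)))
                 (is_series_Rscal (- / INR (S r)) _ _ IH))].
    intros m; cbv beta. pose proof (INR_S_pos m). pose proof (pow_lt _ (S q) (INR_S_pos m)).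
    change (INR (S m) ^ S (S q)) with (INR (S m) * INR (S m) ^ S q). field. lra.
Qed.

Theorem theorem1 (lam : R) (p r : nat)
  (Hlam0 : lam <> 0) (Hlam : -1 < lam) (Hp : (1 < p)%nat) (Hr : (0 < r)%nat) :
  RInt (fun x => x ^ (r - 1) * deg_Li (Z.of_nat p) lam x) 0 1 =
  sum_n_m (fun k => (-1) ^ (k - 1) / INR r ^ k * deg_zeta lam (INR (p - k + 1))) 1 (p - 1)
  + (-1) ^ (p - 1) / INR r ^ p *
    sum_n (fun i => 1 / (gbinom lam i * (lam + INR i + 1))) (r - 1).
Proof.
  destruct p as [|q]; [lia|]. destruct r as [|r]; [lia|].
  replace (S q - 1)%nat with q by lia. replace (S r - 1)%nat with r by lia.
  lazymatch goal with |- ?lhs = _ =>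
    change (lhs = zeta_expansion (fun s => deg_zeta lam (INR s)) (INR (S r))
                    (sum_n (beta_term lam) r) q)
  end.
  set (c m := dcoef lam m / INR (S m) ^ S q).
  apply is_RInt_unique.
  replace (zeta_expansion _ _ _ q) with (Series (fun m => c m / INR (S (m + S r)))).
  - eapply is_RInt_ext;
      [|apply is_RInt_Series_pow, ex_series_abs_dcoef_div_pow; auto; lia].
    intros x _. rewrite deg_Li_nat, <- Series_scal_l. apply Series_ext. intros m.
    unfold c. rewrite (Nat.add_comm m (S r)), pow_add. simpl. ring.
  - apply is_series_unique.
    eapply is_series_Rext; [|apply (is_series_zeta_expansion lam r q Hlam0 Hlam)].
    intros m. unfold c.
    replace (INR (S (m + S r))) with (INR (S m) + INR (S r)) by (rewrite INR_S_add, S_INR; ring).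
    pose proof (INR_S_pos r). pose proof (INR_S_pos m). pose proof (pow_lt _ (S q) (INR_S_pos m)).
    field. repeat split; lra.
Qed.
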